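(* Let $n\ge1$. For every assertion $\varphi$, every environment $\eta$ of ordinary variables, every $\rho:\mathsf{AVar}\to\mathsf{IRel}_1$ and every $\rho':\mathsf{AVar}\to\mathsf{IRel}_n$ such that $\Delta_n(\rho(a))=\rho'(a)$ for all $a\in\mathsf{AVar}$, we have $\Delta_n([\![\varphi]\!]^1_{\eta,\rho})=[\![\varphi]\!]^n_{\eta,\rho'}$.
   Context: $\mathsf{Heap}$ is the set of finite partial functions from $\mathsf{PosInt}$ to $\mathsf{Int}$; $[]$ is the empty heap; $h\cdot g$ is the union of heaps with disjoint domains; $g\sqsubseteq h$ means $h$ extends $g$. On $\mathsf{Heap}^n$, $\sqsubseteq$ and $\cdot$ are componentwise. $\mathsf{IRel}_n$ is the set of $\sqsubseteq$-upward closed subsets of $\mathsf{Heap}^n$. For $p,q\in\mathsf{IRel}_n$, $p*q=\{\mathbf f\cdot\mathbf g\mid\mathbf f\in p,\mathbf g\in q,\text{ componentwise disjoint domains}\}$. For $X\subseteq\mathsf{Heap}$, $\Delta_n(X)=\{(h_1,\dots,h_n)\mid\exists f\in X.\ f\sqsubseteq h_k\text{ for all }k\}$. Assertions are built from primitive assertions $P$ (such as $E\hookrightarrow F$ for integer expressions $E,F$, and heap-independent boolean conditions), assertion variables $a\in\mathsf{AVar}$, $\mathsf{true}$, $\mathsf{false}$, $\wedge$, $\vee$, $*$, and quantifiers $\exists x,\forall x$ over ordinary integer variables (no implication or separating implication). An environment $\eta$ maps ordinary variables to integers; each primitive $P$ has a meaning $[\![P]\!]^{\mathrm{prim}}_\eta\subseteq\mathsf{Heap}$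 (e.g. $E\hookrightarrow F$ denotes the heaps $h$ with $[\![E]\!]_\eta\in\operatorname{dom}(h)$ and $h([\![E]\!]_\eta)=[\![F]\!]_\eta$). Given $\eta$ and $\rho:\mathsf{AVar}\to\mathsf{IRel}_n$, the $n$-ary meaning $[\![\varphi]\!]^n_{\eta,\rho}\in\mathsf{IRel}_n$ is: $[\![P]\!]^n=\Delta_n([\![P]\!]^{\mathrm{prim}}_\eta)$, $[\![a]\!]^n=\rho(a)$, $[\![\mathsf{true}]\!]^n=\mathsf{Heap}^n$, $[\![\mathsf{false}]\!]^n=\emptyset$, $\wedge,\vee,*$ are interpreted by $\cap,\cup,*$, $\exists x$ by the union over $v\in\mathsf{Int}$ of the meanings under $\eta[x\mapsto v]$, and $\forall x$ by the corresponding intersection. *)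

From Stdlib Require Import ZArith List.
From Stdlib Require Fin.
Import ListNotations.

Record Heap : Type := mkHeap {
  hfun : positive -> option Z;
  hfin : exists l : list positive, forall p, hfun p <> None -> In p l
}.

Definition hext (g h : Heap) : Prop :=
  forall p v, hfun g p = Some v -> hfun h p = Some v.

Definition hjoin (f g h : Heap) : Prop :=
  forall p, (hfun f p = None \/ hfun g p = None) /\
            hfun h p = match hfun f p with Some v => Some v | None => hfun g p end.

Definition HTuple (n : nat) : Type := Fin.t n -> Heap.

Definition text {n} (g h : HTuple n) : Prop := forall k, hext (g k) (h k).

Definition upclosed {n} (P : HTuple n -> Prop) : Prop :=
  forall g h, text g h -> P g -> P h.

Record IRel (n : nat) : Type := mkIRel {
  irel : HTuple n -> Prop;
  irel_up : upclosed irel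
}.
Arguments irel {n} _ _.

Definition tstar {n} (p q : HTuple n -> Prop) : HTuple n -> Prop :=
  fun h => exists f g, p f /\ q g /\ forall k, hjoin (f k) (g k) (h k).

Definition Delta (n : nat) (X : Heap -> Prop) : HTuple n -> Prop :=
  fun h => exists f, X f /\ forall k, hext f (h k).

Definition as1 (h : Heap) : HTuple 1 := fun _ => h.

Definition var := nat.
Definition avar := nat.
Definition env := var -> Z.
Definition upd (eta : env) (x : var) (v : Z) : env :=
  fun y => if Nat.eqb y x then v else eta y.

Inductive assertion (Prim : Type) : Type :=
| APrim : Prim -> assertion Prim
| AVarA : avar -> assertion Prim
| ATrue : assertion Prim
| AFalse : assertion Prim
| AAnd : assertion Prim -> assertion Prim -> assertion Prim
| AOr : assertion Prim -> assertion Prim -> assertion Prim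
| AStar : assertion Prim -> assertion Prim -> assertion Prim
| AEx : var -> assertion Prim -> assertion Prim
| AAll : var -> assertion Prim -> assertion Prim.
Arguments APrim {Prim} _.
Arguments AVarA {Prim} _.
Arguments ATrue {Prim}.
Arguments AFalse {Prim}.
Arguments AAnd {Prim} _ _.
Arguments AOr {Prim} _ _.
Arguments AStar {Prim} _ _.
Arguments AEx {Prim} _ _.
Arguments AAll {Prim} _ _.

Definition expr := env -> Z.
Inductive std_prim : Type :=
| PPointsTo : expr -> expr -> std_prim
| PCond : (env -> Prop) -> std_prim.

Definition std_prim_sem (P : std_prim) (eta : env) : Heap -> Prop :=
  match P with
  | PPointsTo E F => fun h => exists p, Zpos p = E eta /\ hfun h p = Some (F eta)
  | PCond b => fun _ => b eta
  end.

Fixpoint sem {Prim : Type} (prim_sem : Prim -> env -> Heap -> Prop) (n : nat)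
    (rho : avar -> IRel n) (phi : assertion Prim) (eta : env) : HTuple n -> Prop :=
  match phi with
  | APrim P => Delta n (prim_sem P eta)
  | AVarA a => irel (rho a)
  | ATrue => fun _ => True
  | AFalse => fun _ => False
  | AAnd p q => fun h => sem prim_sem n rho p eta h /\ sem prim_sem n rho q eta h
  | AOr p q => fun h => sem prim_sem n rho p eta h \/ sem prim_sem n rho q eta h
  | AStar p q => tstar (sem prim_sem n rho p eta) (sem prim_sem n rho q eta)
  | AEx x p => fun h => exists v : Z, sem prim_sem n rho p (upd eta x v) h
  | AAll x p => fun h => forall v : Z, sem prim_sem n rho p (upd eta x v) h
  end.

(* The proof is an induction on phi, in which each connective is
   handled by a commutation property of Delta_n with the corresponding
   operation on heap sets:
   - Delta_n(Delta_1 X) = Delta_n X  (primitives), Delta_n(Heap) = Heap^n;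
   - Delta_n commutes with unions (disjunction, existential) for trivial reasons;
   - for upward-closed X, a tuple h lies in Delta_{n+1} X iff the pointwise
     meet of h (the largest heap extended by every component) lies in X; hence
     Delta_{n+1} commutes with intersections (conjunction, universal);
   - Delta_{n+1}(X * Y) = Delta_{n+1} X * Delta_{n+1} Y, by splitting each
     component along the first factor (heap difference) and, conversely, by
     taking the union of the two witnesses.
   Upward closure of every meaning, and the identification of Heap^1 with Heap
   for upward-closed sets, are the bookkeeping facts that make these apply. *)

From Stdlib Require Import ZArith List Lia.
From Stdlib Require Fin.
From Stdlib Require Import ClassicalEpsilon.

Lemma hext_refl (h : Heap) : hext h h.
Proof. intros p v H; exact H. Qed.

Lemma hext_trans (a b c : Heap) : hext a b -> hext b c -> hext a c.
Proof. unfold hext; auto. Qed.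

Definition hupclosed (X : Heap -> Prop) : Prop :=
  forall g g', hext g g' -> X g -> X g'.

Definition hstar (X Y : Heap -> Prop) : Heap -> Prop :=
  fun h => exists a b, X a /\ Y b /\ hjoin a b h.

Program Definition hempty : Heap := mkHeap (fun _ => None) _.
Next Obligation. exists nil. intros p H; congruence. Qed.

Lemma hempty_hext (h : Heap) : hext hempty h.
Proof. intros p v H; discriminate H. Qed.

Definition hdiff_fun (h f : Heap) (p : positive) : option Z :=
  match hfun f p with Some _ => None | None => hfun h p end.

Lemma hdiff_fin (h f : Heap) :
  exists l : list positive, forall p, hdiff_fun h f p <> None -> In p l.
Proof.
  destruct (hfin h) as [l Hl]. exists l. intros p H. apply Hl.
  unfold hdiff_fun in H. destruct (hfun f p); congruence.
Qed.

Definition hdiff (h f : Heap) : Heap := mkHeap (hdiff_fun h f) (hdiff_fin h f).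

Definition hunion_fun (a b : Heap) (p : positive) : option Z :=
  match hfun a p with Some v => Some v | None => hfun b p end.

Lemma hunion_fin (a b : Heap) :
  exists l : list positive, forall p, hunion_fun a b p <> None -> In p l.
Proof.
  destruct (hfin a) as [l1 H1], (hfin b) as [l2 H2]. exists (l1 ++ l2).
  intros p H. apply in_or_app. unfold hunion_fun in H.
  destruct (hfun a p) eqn:E; [left; apply H1; congruence | right; apply H2; exact H].
Qed.

Definition hunion (a b : Heap) : Heap := mkHeap (hunion_fun a b) (hunion_fin a b).

Lemma hjoin_hext_l (a b c : Heap) : hjoin a b c -> hext a c.
Proof. intros J p v Hp. destruct (J p) as [_ E]. rewrite E, Hp. reflexivity. Qed.

Lemma hjoin_hdiff (f h : Heap) : hext f h -> hjoin f (hdiff h f) h.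
Proof.
  intros Hf p. simpl. unfold hdiff_fun.
  destruct (hfun f p) eqn:E; split; auto.
Qed.

Lemma hjoin_hext_hdiff (a b c h : Heap) :
  hjoin a b c -> hext c h -> hext b (hdiff h a).
Proof.
  intros J Hc p v Hp. simpl. unfold hdiff_fun. destruct (J p) as [[D|D] E].
  - rewrite D. apply Hc. rewrite E, D. exact Hp.
  - congruence.
Qed.

Lemma hjoin_hunion (a b f g h : Heap) :
  hext a f -> hext b g -> hjoin f g h ->
  hjoin a b (hunion a b) /\ hext (hunion a b) h.
Proof.
  intros Ha Hb J. split.
  - intros p. simpl. unfold hunion_fun. split; [|reflexivity].
    destruct (hfun a p) as [u|] eqn:Ea; [|left; reflexivity].
    destruct (hfun b p) as [w|] eqn:Eb; [|right; reflexivity].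
    destruct (J p) as [[D|D] _]; [rewrite (Ha p u Ea) in D | rewrite (Hb p w Eb) in D];
      discriminate D.
  - intros p v. simpl. unfold hunion_fun. destruct (J p) as [D E]. rewrite E.
    destruct (hfun a p) eqn:Ea.
    + intros Hv. rewrite (Ha p z Ea). exact Hv.
    + intros Hv. pose proof (Hb p v Hv) as Hg. rewrite Hg.
      destruct (hfun f p) eqn:Ef; [|reflexivity].
      destruct D as [D|D]; congruence.
Qed.

Definition at1 (P : HTuple 1 -> Prop) : Heap -> Prop := fun g => P (as1 g).

Lemma fin1_eq (k : Fin.t 1) : k = Fin.F1.
Proof.
  apply (Fin.caseS' k (fun k => k = Fin.F1)); [reflexivity|].
  intros k'; apply (Fin.case0 (fun k' => Fin.FS k' = Fin.F1) k').
Qed.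

Lemma upclosed_tuple1 (P : HTuple 1 -> Prop) (f : HTuple 1) :
  upclosed P -> P f -> P (as1 (f Fin.F1)).
Proof.
  intros HP. apply HP. intros k. rewrite (fin1_eq k). apply hext_refl.
Qed.

Lemma at1_upclosed (P : HTuple 1 -> Prop) : upclosed P -> hupclosed (at1 P).
Proof. intros HP g g' H. apply HP. intros k; exact H. Qed.

Lemma at1_tstar (P Q : HTuple 1 -> Prop) (h : Heap) :
  upclosed P -> upclosed Q -> (at1 (tstar P Q) h <-> hstar (at1 P) (at1 Q) h).
Proof.
  intros HP HQ. split.
  - intros [f [g [Pf [Qg J]]]]. exists (f Fin.F1), (g Fin.F1). unfold at1.
    split; [|split]; [apply upclosed_tuple1; auto .. | apply (J Fin.F1)].
  - intros [a [b [Pa [Qb J]]]]. exists (as1 a), (as1 b).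
    split; [exact Pa | split; [exact Qb | intros k; exact J]].
Qed.

Lemma Delta_upclosed (n : nat) (X : Heap -> Prop) : upclosed (Delta n X).
Proof.
  intros g h Hgh [f [Xf Hf]]. exists f; split; auto.
  intros k; eapply hext_trans; eauto.
Qed.

Lemma tstar_upclosed {n} (P Q : HTuple n -> Prop) :
  upclosed Q -> upclosed (tstar P Q).
Proof.
  intros HQ h h' Hhh' [f [g [Pf [Qg J]]]].
  exists f, (fun k => hdiff (h' k) (f k)). split; [exact Pf|split].
  - apply (HQ g); auto. intros k.
    apply (hjoin_hext_hdiff (f k) (g k) (h k)); auto.
  - intros k. apply hjoin_hdiff.
    apply hext_trans with (h k); [apply (hjoin_hext_l _ (g k)), J | apply Hhh'].
Qed.

Lemma sem_upclosed {Prim} (ps : Prim -> env -> Heap -> Prop) (n : nat)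
    (rho : avar -> IRel n) (phi : assertion Prim) :
  forall eta, upclosed (sem ps n rho phi eta).
Proof.
  induction phi; intros eta; simpl.
  - apply Delta_upclosed.
  - apply irel_up.
  - intros g h _ _; exact I.
  - intros g h _ F; exact F.
  - intros g h Hgh [A B]; split; [eapply IHphi1|eapply IHphi2]; eauto.
  - intros g h Hgh [A|B]; [left; eapply IHphi1|right; eapply IHphi2]; eauto.
  - apply tstar_upclosed; auto.
  - intros g h Hgh [w Hw]; exists w; eapply IHphi; eauto.
  - intros g h Hgh Hw w; eapply IHphi; eauto.
Qed.

Lemma Delta_ext (n : nat) (X Y : Heap -> Prop) (h : HTuple n) :
  (forall g, X g <-> Y g) -> (Delta n X h <-> Delta n Y h).
Proof.
  intros E. split; intros [f [Hf Hk]]; exists f; split; auto; apply E; exact Hf.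
Qed.

Lemma tstar_ext {n} (P P' Q Q' : HTuple n -> Prop) (h : HTuple n) :
  (forall f, P f <-> P' f) -> (forall g, Q g <-> Q' g) ->
  (tstar P Q h <-> tstar P' Q' h).
Proof.
  intros EP EQ. split; intros [f [g [Pf [Qg J]]]]; exists f, g;
    (split; [apply EP, Pf | split; [apply EQ, Qg | exact J]]).
Qed.

Lemma Delta_Delta1 (n : nat) (X : Heap -> Prop) (h : HTuple n) :
  Delta n (at1 (Delta 1 X)) h <-> Delta n X h.
Proof.
  split.
  - intros [g [[f [Xf Hf]] Hg]]. exists f; split; auto.
    intros k; eapply hext_trans; [apply (Hf Fin.F1) | apply Hg].
  - intros [f [Xf Hf]]. exists f; split; auto.
    exists f; split; auto. intros k; apply hext_refl.
Qed.

Lemma Delta_true (n : nat) (h : HTuple n) : Delta n (fun _ => True) h.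
Proof. exists hempty. split; [exact I | intros k; apply hempty_hext]. Qed.

Lemma Delta_or (n : nat) (X Y : Heap -> Prop) (h : HTuple n) :
  Delta n (fun g => X g \/ Y g) h <-> Delta n X h \/ Delta n Y h.
Proof.
  split.
  - intros [f [[Xf|Yf] Hf]]; [left|right]; exists f; auto.
  - intros [[f [Xf Hf]]|[f [Yf Hf]]]; exists f; auto.
Qed.

Lemma Delta_ex (n : nat) (X : Z -> Heap -> Prop) (h : HTuple n) :
  Delta n (fun g => exists v, X v g) h <-> exists v, Delta n (X v) h.
Proof.
  split.
  - intros [f [[v Xf] Hf]]. exists v, f; auto.
  - intros [v [f [Xf Hf]]]. exists f. split; [exists v|]; auto.
Qed.

Definition hmeet_fun {n} (h : HTuple (S n)) (p : positive) : option Z :=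
  match hfun (h Fin.F1) p with
  | Some v => if excluded_middle_informative (forall k, hfun (h k) p = Some v)
              then Some v else None
  | None => None
  end.

Lemma hmeet_fin {n} (h : HTuple (S n)) :
  exists l : list positive, forall p, hmeet_fun h p <> None -> In p l.
Proof.
  destruct (hfin (h Fin.F1)) as [l Hl]. exists l. intros p H. apply Hl.
  unfold hmeet_fun in H. destruct (hfun (h Fin.F1) p); congruence.
Qed.

Definition hmeet {n} (h : HTuple (S n)) : Heap := mkHeap (hmeet_fun h) (hmeet_fin h).

Lemma hmeet_lower {n} (h : HTuple (S n)) (k : Fin.t (S n)) : hext (hmeet h) (h k).
Proof.
  intros p v. simpl. unfold hmeet_fun.
  destruct (hfun (h Fin.F1) p); [|discriminate].
  destruct (excluded_middle_informative _) as [Hk|]; [|discriminate].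
  intros E. injection E as <-. apply Hk.
Qed.

Lemma hmeet_greatest {n} (f : Heap) (h : HTuple (S n)) :
  (forall k, hext f (h k)) -> hext f (hmeet h).
Proof.
  intros Hf p v Hp. simpl. unfold hmeet_fun. rewrite (Hf Fin.F1 p v Hp).
  destruct (excluded_middle_informative _) as [_|Hn]; [reflexivity|].
  exfalso; apply Hn; intros k; apply Hf, Hp.
Qed.

Lemma Delta_hmeet {n} (X : Heap -> Prop) (h : HTuple (S n)) :
  hupclosed X -> (Delta (S n) X h <-> X (hmeet h)).
Proof.
  intros HX; split.
  - intros [f [Xf Hf]]. apply (HX f); auto. apply hmeet_greatest, Hf.
  - intros Hm. exists (hmeet h). split; [exact Hm | apply hmeet_lower].
Qed.

Lemma Delta_and {n} (X Y : Heap -> Prop) (h : HTuple (S n)) :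
  hupclosed X -> hupclosed Y ->
  (Delta (S n) (fun g => X g /\ Y g) h <-> Delta (S n) X h /\ Delta (S n) Y h).
Proof.
  intros HX HY. rewrite !Delta_hmeet; [reflexivity | auto ..].
  intros g g' H [A B]; split; [apply (HX g) | apply (HY g)]; auto.
Qed.

Lemma Delta_all {n} (X : Z -> Heap -> Prop) (h : HTuple (S n)) :
  (forall v, hupclosed (X v)) ->
  (Delta (S n) (fun g => forall v, X v g) h <-> forall v, Delta (S n) (X v) h).
Proof.
  intros HX. rewrite Delta_hmeet.
  - split; intros H v; [apply Delta_hmeet | apply (Delta_hmeet (X v))]; auto.
  - intros g g' Hg Hv v. apply (HX v g); auto.
Qed.

Lemma Delta_star {n} (X Y : Heap -> Prop) (h : HTuple (S n)) :
  Delta (S n) (hstar X Y) h <-> tstar (Delta (S n) X) (Delta (S n) Y) h.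
Proof.
  split.
  - intros [c [[a [b [Xa [Yb J]]]] Hc]].
    assert (Hak : forall k, hext a (h k))
      by (intros k; apply hext_trans with c; [apply (hjoin_hext_l a b), J | apply Hc]).
    exists (fun _ => a), (fun k => hdiff (h k) a). split; [|split].
    + exists a. split; [exact Xa | intros k; apply hext_refl].
    + exists b. split; [exact Yb|]. intros k. apply (hjoin_hext_hdiff a b c); auto.
    + intros k. apply hjoin_hdiff, Hak.
  - intros [f [g [[a [Xa Ha]] [[b [Yb Hb]] J]]]].
    exists (hunion a b). split.
    + exists a, b. repeat split; auto.
      apply (hjoin_hunion a b (f Fin.F1) (g Fin.F1) (h Fin.F1)); auto.
    + intros k. apply (hjoin_hunion a b (f k) (g k) (h k)); auto.
Qed.

Lemma Delta_sem {Prim : Type} (prim_sem : Prim -> env -> Heap -> Prop)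
    (n : nat) (rho : avar -> IRel 1) (rho' : avar -> IRel (S n))
    (Hrho : forall (a : avar) (h : HTuple (S n)),
        Delta (S n) (at1 (irel (rho a))) h <-> irel (rho' a) h)
    (phi : assertion Prim) :
  forall eta (h : HTuple (S n)),
    Delta (S n) (at1 (sem prim_sem 1 rho phi eta)) h <->
    sem prim_sem (S n) rho' phi eta h.
Proof.
  pose proof (fun psi eta => at1_upclosed _ (sem_upclosed prim_sem 1 rho psi eta))
    as Hup.
  induction phi as [P | a | | | phi1 IHphi1 phi2 IHphi2 | phi1 IHphi1 phi2 IHphi2
                  | phi1 IHphi1 phi2 IHphi2 | x phi IHphi | x phi IHphi];
    intros eta h; simpl.
  - apply Delta_Delta1.
  - apply Hrho.
  - split; [intros _; exact I | intros _; apply Delta_true].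
  - split; [intros [f [[] _]] | intros []].
  - rewrite <- IHphi1, <- IHphi2. apply Delta_and; apply Hup.
  - rewrite <- IHphi1, <- IHphi2. apply Delta_or.
  - rewrite (Delta_ext _ _ (hstar (at1 (sem prim_sem 1 rho phi1 eta))
                                  (at1 (sem prim_sem 1 rho phi2 eta))))
      by (intros g; apply at1_tstar; apply sem_upclosed).
    rewrite Delta_star. apply tstar_ext; auto.
  - unfold at1 at 1. rewrite Delta_ex.
    split; intros [v Hv]; exists v; apply IHphi; exact Hv.
  - unfold at1 at 1. rewrite Delta_all by (intros v; apply Hup).
    split; intros Hv v; apply IHphi; apply Hv.
Qed.

Theorem mainTheorem2 (Prim : Type) (prim_sem : Prim -> env -> Heap -> Prop)
  (n : nat) (Hn : 1 <= n) (phi : assertion Prim) (eta : env)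
  (rho : avar -> IRel 1) (rho' : avar -> IRel n)
  (Hrho : forall (a : avar) (h : HTuple n),
      Delta n (fun g => irel (rho a) (as1 g)) h <-> irel (rho' a) h) :
  forall h : HTuple n,
    Delta n (fun g => sem prim_sem 1 rho phi eta (as1 g)) h <->
    sem prim_sem n rho' phi eta h.
Proof.
  destruct n as [|m]; [lia|].
  apply Delta_sem; exact Hrho.
Qed.
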